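(* Let $g=v+h$ be an s-warped spacetime whose Weyl tensor is $W=\rho(3S+G)$ with $S=U\otimes U-*U\otimes *U$, where $U$ is the time-like unitary 2-form with $U^2=v$, and suppose the Ricci tensor has the form $R=A+\mu h$ with $A$ symmetric and $A\cdot h=0$. Then $$B\equiv R-S[R]-\tfrac12\mathrm r\,g=\beta\,\Pi,\qquad \Pi\equiv v-h,\qquad \beta\equiv\tfrac12\mathrm r-2\mu .$$ Consequently $\mu=\frac14\mathrm r-\frac12\beta$, with $\beta=0$ if $B=0$ and, if $B\neq0$, $\beta=\frac{\epsilon}{2}\sqrt{\operatorname{tr}B^2}$ where $\epsilon=-B(x,x)/|B(x,x)|$ for any unit time-like vector $x$.
   Context: $(M,g)$ is an oriented 4-dimensional spacetime of signature $(-,+,+,+)$, volume element $\eta$, Ricci tensor $R$, scalar curvature $\mathrm r=\operatorname{tr}R$. s-warped: locally $g=v+e^{2\lambda}\hat h$ on a product of a 2-dimensional Lorentzian factor (metric $v$) and a 2-dimensional Riemannian factor (metric $\hat h$), $\lambda$ a function on the Lorentzian factor; $h=e^{2\lambda}\hat h$; $v$ and $h$ are viewed as the orthogonal projectors onto the time-like plane V and space-like plane H. Notation: $(A\cdot B)^\alpha{}_\beta=A^\alpha{}_\mu B^\mu{}_\beta$, $A^2=A\cdot A$, $\operatorname{tr}A=A^\alpha{}_\alpha$, $A(x,x)=A_{\alpha\beta}x^\alpha x^\beta$; $*U=\eta(U)$, $( *U)_{\alpha\beta}=\frac12\eta_{\alpha\beta}{}^{\mu\nu}U_{\mu\nu}$;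 $(U\otimes U)_{\alpha\beta\mu\nu}=U_{\alpha\beta}U_{\mu\nu}$; $(A\wedge B)_{\alpha\beta\mu\nu}=A_{\alpha\mu}B_{\beta\nu}+A_{\beta\nu}B_{\alpha\mu}-A_{\alpha\nu}B_{\beta\mu}-A_{\beta\mu}B_{\alpha\nu}$, $G=\frac12g\wedge g$; for a double 2-form $P$ and symmetric 2-tensor $B$, $P[B]_{\alpha\beta}=P_\alpha{}^\mu{}_\beta{}^\nu B_{\mu\nu}$; for double 2-forms $\operatorname{tr}$ is not used here, $\operatorname{tr}B^2=B^\alpha{}_\mu B^\mu{}_\alpha$. A unit time-like vector satisfies $x^2=-1$. *)

(* Pointwise (tangent space at a point) tensor algebra in dimension 4.
   Tensors are given by their components (all indices down) in an arbitrary
   coordinate basis; indices range over 0..3 (values at other indices are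
   irrelevant: all tensor equalities are only required for indices < 4). *)
From Stdlib Require Import Reals.
Open Scope R_scope.

Definition T2 := nat -> nat -> R.
Definition T4 := nat -> nat -> nat -> nat -> R.

Definition sum4 (f : nat -> R) : R := f 0%nat + f 1%nat + f 2%nat + f 3%nat.

Definition teq2 (A B : T2) : Prop :=
  forall a b, (a < 4)%nat -> (b < 4)%nat -> A a b = B a b.
Definition teq4 (P Q : T4) : Prop :=
  forall a b c d, (a < 4)%nat -> (b < 4)%nat -> (c < 4)%nat -> (d < 4)%nat ->
    P a b c d = Q a b c d.

Definition zero2 : T2 := fun _ _ => 0.
Definition add2 (A B : T2) : T2 := fun a b => A a b + B a b.
Definition sub2 (A B : T2) : T2 := fun a b => A a b - B a b.
Definition scal2 (k : R) (A : T2) : T2 := fun a b => k * A a b.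
Definition add4 (P Q : T4) : T4 := fun a b c d => P a b c d + Q a b c d.
Definition sub4 (P Q : T4) : T4 := fun a b c d => P a b c d - Q a b c d.
Definition scal4 (k : R) (P : T4) : T4 := fun a b c d => k * P a b c d.

Definition symmetric2 (A : T2) : Prop := forall a b, (a < 4)%nat -> (b < 4)%nat -> A a b = A b a.
Definition antisymmetric2 (A : T2) : Prop := forall a b, (a < 4)%nat -> (b < 4)%nat -> A a b = - A b a.

Definition is_inverse (gi g : T2) : Prop :=
  forall a b, (a < 4)%nat -> (b < 4)%nat ->
    sum4 (fun m => gi a m * g m b) = if Nat.eqb a b then 1 else 0.

(* signature (-,+,+,+): g = E^T diag(-1,1,1,1) E for some frame matrix E *)
Definition lorentzian_signature (g : T2) : Prop :=
  exists E : T2, teq2 g (fun a b =>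
    - (E 0%nat a * E 0%nat b) + E 1%nat a * E 1%nat b + E 2%nat a * E 2%nat b + E 3%nat a * E 3%nat b).

(* (A.B)_{ab} = A_a^m B_{mb} *)
Definition dot (gi : T2) (A B : T2) : T2 :=
  fun a b => sum4 (fun m => sum4 (fun n => A a m * gi m n * B n b)).
Definition tr (gi : T2) (A : T2) : R := sum4 (fun a => sum4 (fun b => gi a b * A b a)).
Definition quad (A : T2) (x : nat -> R) : R :=
  sum4 (fun a => sum4 (fun b => A a b * x a * x b)).

(* Levi-Civita symbol, eps_{0123} = 1 *)
Definition sgnpair (i j : nat) : R :=
  if Nat.ltb i j then 1 else if Nat.eqb i j then 0 else -1.
Definition levi (a b c d : nat) : R :=
  sgnpair a b * sgnpair a c * sgnpair a d * sgnpair b c * sgnpair b d * sgnpair c d.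
Definition det4 (g : T2) : R :=
  sum4 (fun a => sum4 (fun b => sum4 (fun c => sum4 (fun d =>
    levi a b c d * g 0%nat a * g 1%nat b * g 2%nat c * g 3%nat d)))).
(* volume element (orientation of the coordinate basis) *)
Definition vol (g : T2) : T4 := fun a b c d => sqrt (Rabs (det4 g)) * levi a b c d.

Definition hodge (g gi : T2) (U : T2) : T2 :=
  fun a b => / 2 * sum4 (fun r => sum4 (fun s => sum4 (fun m => sum4 (fun n =>
    vol g a b r s * gi r m * gi s n * U m n)))).

Definition tprod (U V : T2) : T4 := fun a b c d => U a b * V c d.
Definition kn (A B : T2) : T4 := fun a b m n =>
  A a m * B b n + A b n * B a m - A a n * B b m - A b m * B a n.
Definition Gt (g : T2) : T4 := scal4 (/ 2) (kn g g).
Definition Sdf (g gi U : T2) : T4 := sub4 (tprod U U) (tprod (hodge g gi U) (hodge g gi U)).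
(* P[B]_{ab} = P_a^m_b^n B_{mn} *)
Definition act (gi : T2) (P : T4) (B : T2) : T2 :=
  fun a b => sum4 (fun r => sum4 (fun s => sum4 (fun m => sum4 (fun n =>
    P a r b s * gi r m * gi s n * B m n)))).

Definition curvature_symmetries (Rm : T4) : Prop :=
  forall a b c d, (a < 4)%nat -> (b < 4)%nat -> (c < 4)%nat -> (d < 4)%nat ->
    Rm a b c d = - Rm b a c d /\ Rm a b c d = - Rm a b d c /\
    Rm a b c d = Rm c d a b /\ Rm a b c d + Rm a c d b + Rm a d b c = 0.

Definition ricci (gi : T2) (Rm : T4) : T2 :=
  fun b d => sum4 (fun a => sum4 (fun c => gi a c * Rm a b c d)).
Definition scal (gi : T2) (Rm : T4) : R := tr gi (ricci gi Rm).
(* Weyl tensor: Riem = W + 1/2 g /\ Ric - r/12 g /\ g *)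
Definition weyl (g gi : T2) (Rm : T4) : T4 :=
  add4 (sub4 Rm (scal4 (/ 2) (kn g (ricci gi Rm))))
       (scal4 (scal gi Rm / 12) (kn g g)).

(* pointwise content of "s-warped, g = v + h": orthogonal splitting of the
   tangent space into a time-like 2-plane V (projector v) and a space-like
   2-plane H (projector h) *)
Definition swarped_split (g gi v h : T2) : Prop :=
  symmetric2 v /\ symmetric2 h /\ teq2 g (add2 v h) /\
  teq2 (dot gi v v) v /\ teq2 (dot gi h h) h /\ teq2 (dot gi v h) zero2 /\
  tr gi v = 2 /\ tr gi h = 2 /\
  (exists x : nat -> R, quad v x < 0) /\ (forall x : nat -> R, 0 <= quad h x).

(* Raising an index with the inverse metric [G] turns the [G]-product of 2-tensors
   into matrix multiplication, and [v], [h] into complementary rank-2 projectors.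
   On the time-like plane, [u = G U] is [g]-antisymmetric with [u^2 = 1], so the
   Cayley-Hamilton identity of a 2x2 block gives [u a u = tr(a) 1 - a] for every
   [g]-symmetric [a] supported there: [U G A G U^T = A - tr(A) v].  The dual [*U]
   is computed from the transformation law of the Levi-Civita symbol: it is
   supported on [H] and, because [det g < 0], squares to [-h].  Hence
   [S[R] = A - tr(A) v - mu h] and [B = beta (v - h)]; then [tr B^2 = 4 beta^2]
   and [B(x,x) = beta Pi(x,x)] with [Pi(x,x) < 0] for a unit time-like [x] give
   [beta]. *)

From Stdlib Require Import Reals Lra Lia Setoid Morphisms.
Open Scope R_scope.

(** * Matrix algebra *)

Definition mmul (A B : T2) : T2 := fun a b => sum4 (fun m => A a m * B m b).
Definition transp (A : T2) : T2 := fun a b => A b a.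
Definition id4 : T2 := fun a b => if Nat.eqb a b then 1 else 0.
Definition mtrace (A : T2) : R := sum4 (fun a => A a a).

Ltac case_index a := destruct a as [|[|[|[|a]]]]; try lia.

Lemma sum4_ext (f f' : nat -> R) :
  (forall i, (i < 4)%nat -> f i = f' i) -> sum4 f = sum4 f'.
Proof. intros H. unfold sum4. rewrite !H by lia. reflexivity. Qed.

#[export] Instance teq2_equiv : Equivalence teq2.
Proof.
  split.
  - intros A a b _ _; reflexivity.
  - intros A B H a b Ha Hb; symmetry; apply H; auto.
  - intros A B C H1 H2 a b Ha Hb; rewrite H1, H2; auto.
Qed.

#[export] Instance mmul_proper : Proper (teq2 ==> teq2 ==> teq2) mmul.
Proof.
  intros A A' HA B B' HB a b Ha Hb. unfold mmul. apply sum4_ext; intros.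
  rewrite HA, HB; auto.
Qed.
#[export] Instance transp_proper : Proper (teq2 ==> teq2) transp.
Proof. intros A A' HA a b Ha Hb. apply HA; auto. Qed.
#[export] Instance add2_proper : Proper (teq2 ==> teq2 ==> teq2) add2.
Proof. intros A A' HA B B' HB a b Ha Hb. unfold add2. rewrite HA, HB; auto. Qed.
#[export] Instance sub2_proper : Proper (teq2 ==> teq2 ==> teq2) sub2.
Proof. intros A A' HA B B' HB a b Ha Hb. unfold sub2. rewrite HA, HB; auto. Qed.
#[export] Instance scal2_proper : Proper (eq ==> teq2 ==> teq2) scal2.
Proof. intros k k' -> B B' HB a b Ha Hb. unfold scal2. rewrite HB; auto. Qed.
#[export] Instance mtrace_proper : Proper (teq2 ==> eq) mtrace.
Proof. intros A A' HA. apply sum4_ext; intros. apply HA; auto. Qed.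
#[export] Instance quad_proper : Proper (teq2 ==> eq ==> eq) quad.
Proof.
  intros A A' HA x x' ->. unfold quad.
  apply sum4_ext; intros; apply sum4_ext; intros. rewrite HA; auto.
Qed.

Ltac pointwise := let a := fresh "a" in let b := fresh "b" in
  intros a b ? ?; unfold mmul, transp, add2, sub2, scal2, zero2, sum4; unfold Rdiv; ring.

Lemma mmul_assoc A B C : teq2 (mmul (mmul A B) C) (mmul A (mmul B C)). Proof. pointwise. Qed.
Lemma mmul_addl A B C : teq2 (mmul (add2 A B) C) (add2 (mmul A C) (mmul B C)).
Proof. pointwise. Qed.
Lemma mmul_addr A B C : teq2 (mmul C (add2 A B)) (add2 (mmul C A) (mmul C B)).
Proof. pointwise. Qed.
Lemma mmul_subl A B C : teq2 (mmul (sub2 A B) C) (sub2 (mmul A C) (mmul B C)).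
Proof. pointwise. Qed.
Lemma mmul_subr A B C : teq2 (mmul C (sub2 A B)) (sub2 (mmul C A) (mmul C B)).
Proof. pointwise. Qed.
Lemma mmul_scall k A B : teq2 (mmul (scal2 k A) B) (scal2 k (mmul A B)). Proof. pointwise. Qed.
Lemma mmul_scalr k A B : teq2 (mmul A (scal2 k B)) (scal2 k (mmul A B)). Proof. pointwise. Qed.
Lemma mmul0l A : teq2 (mmul zero2 A) zero2. Proof. pointwise. Qed.
Lemma mmul0r A : teq2 (mmul A zero2) zero2. Proof. pointwise. Qed.
Lemma mmul1l A : teq2 (mmul id4 A) A.
Proof. intros a b Ha Hb. unfold mmul, id4, sum4. case_index a; simpl; ring. Qed.
Lemma mmul1r A : teq2 (mmul A id4) A.
Proof. intros a b Ha Hb. unfold mmul, id4, sum4. case_index b; simpl; ring. Qed.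

Lemma transp_mmul A B : teq2 (transp (mmul A B)) (mmul (transp B) (transp A)).
Proof. pointwise. Qed.
Lemma transp_scal k A : teq2 (transp (scal2 k A)) (scal2 k (transp A)). Proof. pointwise. Qed.
Lemma transp0 : teq2 (transp zero2) zero2. Proof. pointwise. Qed.
Lemma transp_id4 : teq2 (transp id4) id4.
Proof. intros a b _ _. unfold transp, id4. rewrite PeanoNat.Nat.eqb_sym. reflexivity. Qed.

Lemma mtrace_add A B : mtrace (add2 A B) = mtrace A + mtrace B.
Proof. unfold mtrace, add2, sum4; ring. Qed.
Lemma mtrace_sub A B : mtrace (sub2 A B) = mtrace A - mtrace B.
Proof. unfold mtrace, sub2, sum4; ring. Qed.
Lemma mtrace_scal k A : mtrace (scal2 k A) = k * mtrace A.
Proof. unfold mtrace, scal2, sum4; ring. Qed.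
Lemma mtrace0 : mtrace zero2 = 0.
Proof. unfold mtrace, zero2, sum4; ring. Qed.
Lemma mtrace_id4 : mtrace id4 = 4.
Proof. unfold mtrace, id4, sum4; simpl; ring. Qed.
Lemma mtrace_mmulC A B : mtrace (mmul A B) = mtrace (mmul B A).
Proof. unfold mtrace, mmul, sum4; ring. Qed.
Lemma mtrace_transp A : mtrace (transp A) = mtrace A.
Proof. unfold mtrace, transp, sum4; ring. Qed.

Lemma mtrace_sym_anti S K :
  teq2 (transp S) S -> teq2 (transp K) (scal2 (-1) K) -> mtrace (mmul S K) = 0.
Proof.
  intros HS HK.
  assert (mtrace (mmul S K) = - mtrace (mmul S K)); [|lra].
  rewrite <- mtrace_transp at 1.
  rewrite transp_mmul, HK, HS, mmul_scall, mtrace_scal, mtrace_mmulC. ring.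
Qed.

Lemma mmul_transp_swap X M Y Z : teq2 (transp M) M ->
  teq2 (mmul (mmul X M) Y) Z -> teq2 (mmul (mmul (transp Y) M) (transp X)) (transp Z).
Proof. intros HM H. rewrite <- H, !transp_mmul, HM, mmul_assoc. reflexivity. Qed.

Lemma symmetric2_transp A : symmetric2 A -> teq2 (transp A) A.
Proof. intros H a b Ha Hb. symmetry; apply H; auto. Qed.
Lemma antisymmetric2_transp A : antisymmetric2 A -> teq2 (transp A) (scal2 (-1) A).
Proof. intros H a b Ha Hb. unfold transp, scal2. rewrite (H b a) by auto. ring. Qed.

Lemma dot_mmul gi A B : teq2 (dot gi A B) (mmul (mmul A gi) B).
Proof. unfold dot. pointwise. Qed.
Lemma tr_mtrace gi A : tr gi A = mtrace (mmul gi A).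
Proof. unfold tr, mtrace, mmul, sum4; ring. Qed.
Lemma quad_add A B x : quad (add2 A B) x = quad A x + quad B x.
Proof. unfold quad, add2, sum4; ring. Qed.
Lemma quad_sub A B x : quad (sub2 A B) x = quad A x - quad B x.
Proof. unfold quad, sub2, sum4; ring. Qed.
Lemma quad_scal k A x : quad (scal2 k A) x = k * quad A x.
Proof. unfold quad, scal2, sum4; ring. Qed.

#[export] Instance act_proper gi P : Proper (teq2 ==> teq2) (act gi P).
Proof.
  intros B B' HB a b Ha Hb. unfold act.
  apply sum4_ext; intros; apply sum4_ext; intros; apply sum4_ext; intros; apply sum4_ext; intros.
  rewrite HB; auto.
Qed.
#[export] Instance dot_proper gi : Proper (teq2 ==> teq2 ==> teq2) (dot gi).
Proof. intros A A' HA B B' HB. rewrite !dot_mmul, HA, HB. reflexivity. Qed.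
#[export] Instance tr_proper gi : Proper (teq2 ==> eq) (tr gi).
Proof. intros A A' HA. rewrite !tr_mtrace, HA. reflexivity. Qed.

(** * Determinant and the Levi-Civita dual *)

Definition minor3 (M : T2) (i j k : nat) : R :=
  M 1%nat i * (M 2%nat j * M 3%nat k - M 2%nat k * M 3%nat j)
  - M 1%nat j * (M 2%nat i * M 3%nat k - M 2%nat k * M 3%nat i)
  + M 1%nat k * (M 2%nat i * M 3%nat j - M 2%nat j * M 3%nat i).
Definition mdet (M : T2) : R :=
  M 0%nat 0%nat * minor3 M 1 2 3 - M 0%nat 1%nat * minor3 M 0 2 3
  + M 0%nat 2%nat * minor3 M 0 1 3 - M 0%nat 3%nat * minor3 M 0 1 2.

Lemma det4_mdet M : det4 M = mdet M.
Proof. unfold det4, mdet, minor3, sum4. cbv [levi sgnpair Nat.ltb Nat.leb Nat.eqb]. ring. Qed.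
Lemma mdet_mmul A B : mdet (mmul A B) = mdet A * mdet B.
Proof. unfold mdet, minor3, mmul, sum4. ring. Qed.

#[export] Instance mdet_proper : Proper (teq2 ==> eq) mdet.
Proof. intros A A' HA. unfold mdet, minor3. rewrite !HA by lia. reflexivity. Qed.

Lemma mdet_id4 : mdet id4 = 1.
Proof. unfold mdet, minor3, id4. cbv [Nat.eqb]. ring. Qed.
Lemma mdet_transp M : mdet (transp M) = mdet M.
Proof. unfold mdet, minor3, transp. ring. Qed.

Definition minkowski : T2 := fun a b => if Nat.eqb a b then (if Nat.eqb a 0 then -1 else 1) else 0.

Lemma lorentzian_mdet_nonpos g : lorentzian_signature g -> mdet g <= 0.
Proof.
  intros [E HE].
  assert (Hg : teq2 g (mmul (mmul (transp E) minkowski) E)).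
  { rewrite HE. intros a b _ _. unfold mmul, transp, minkowski, sum4. cbv [Nat.eqb]. ring. }
  rewrite Hg, !mdet_mmul, mdet_transp.
  assert (Heta : mdet minkowski = -1) by (unfold mdet, minor3, minkowski; cbv [Nat.eqb]; ring).
  rewrite Heta. nra.
Qed.

Definition dual (X : T2) : T2 := fun a b =>
 match a, b with
 | 0%nat,1%nat => X 2%nat 3%nat - X 3%nat 2%nat | 1%nat,0%nat => X 3%nat 2%nat - X 2%nat 3%nat
 | 0%nat,2%nat => X 3%nat 1%nat - X 1%nat 3%nat | 2%nat,0%nat => X 1%nat 3%nat - X 3%nat 1%nat
 | 0%nat,3%nat => X 1%nat 2%nat - X 2%nat 1%nat | 3%nat,0%nat => X 2%nat 1%nat - X 1%nat 2%nat
 | 1%nat,2%nat => X 0%nat 3%nat - X 3%nat 0%nat | 2%nat,1%nat => X 3%nat 0%nat - X 0%nat 3%nat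
 | 1%nat,3%nat => X 2%nat 0%nat - X 0%nat 2%nat | 3%nat,1%nat => X 0%nat 2%nat - X 2%nat 0%nat
 | 2%nat,3%nat => X 0%nat 1%nat - X 1%nat 0%nat | 3%nat,2%nat => X 1%nat 0%nat - X 0%nat 1%nat
 | _,_ => 0 end.

#[export] Instance dual_proper : Proper (teq2 ==> teq2) dual.
Proof.
  intros A A' HA a b Ha Hb. case_index a; case_index b; simpl; rewrite ?HA by lia; reflexivity.
Qed.

Lemma dual_levi X :
  teq2 (fun a b => sum4 (fun r => sum4 (fun s => levi a b r s * X r s))) (dual X).
Proof.
  intros a b Ha Hb. unfold sum4.
  case_index a; case_index b; cbv [dual levi sgnpair Nat.ltb Nat.leb Nat.eqb]; ring.
Qed.

Lemma hodge_dual g gi U :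
  teq2 (hodge g gi U) (scal2 (sqrt (Rabs (mdet g)) / 2) (dual (mmul (mmul gi U) (transp gi)))).
Proof.
  rewrite <- dual_levi, <- det4_mdet.
  unfold hodge, vol. pointwise.
Qed.

Lemma act_Sdf g gi U B :
  teq2 (act gi (Sdf g gi U) B)
       (sub2 (mmul (mmul (mmul (mmul U gi) B) (transp gi)) (transp U))
             (mmul (mmul (mmul (mmul (hodge g gi U) gi) B) (transp gi)) (transp (hodge g gi U)))).
Proof. unfold act, Sdf, sub4, tprod. pointwise. Qed.

Lemma dual_transp X : teq2 (transp (dual X)) (scal2 (-1) (dual X)).
Proof. intros a b Ha Hb. case_index a; case_index b; cbv [dual transp scal2]; ring. Qed.

Lemma dual_congr N X :
  teq2 (mmul (mmul (transp N) (dual (mmul (mmul N X) (transp N)))) N) (scal2 (mdet N) (dual X)).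
Proof.
  intros a b Ha Hb. unfold mmul, transp, scal2, mdet, minor3, sum4.
  case_index a; case_index b; simpl; ring.
Qed.

Lemma dual_congr_inv N Ni X : teq2 (transp N) N -> teq2 (mmul Ni N) id4 -> teq2 (mmul N Ni) id4 ->
  teq2 (dual (mmul (mmul N X) N)) (scal2 (mdet N) (mmul (mmul Ni (dual X)) Ni)).
Proof.
  intros HN HiN HNi.
  pose proof (dual_congr N X) as H. rewrite HN in H.
  set (D := dual (mmul (mmul N X) N)) in *.
  transitivity (mmul (mmul Ni (mmul (mmul N D) N)) Ni).
  - rewrite !mmul_assoc, HNi, mmul1r, <- mmul_assoc, HiN, mmul1l. reflexivity.
  - rewrite H, mmul_scalr, mmul_scall. reflexivity.
Qed.

(* An antisymmetric tensor through its components above the diagonal, so that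
   ring sees the antisymmetry. *)
Definition upper_part (U : T2) : T2 := fun a b =>
  if Nat.ltb a b then U a b else if Nat.eqb a b then 0 else - U b a.

Lemma antisymmetric2_upper_part U : antisymmetric2 U -> teq2 U (upper_part U).
Proof.
  intros H a b Ha Hb. pose proof (H a b Ha Hb). unfold upper_part.
  case_index a; case_index b; simpl; lra.
Qed.

Lemma dual_mmul_self U : antisymmetric2 U ->
  teq2 (mmul (dual U) U) (scal2 (mtrace (mmul (dual U) U) / 4) id4).
Proof.
  intros HU. rewrite (antisymmetric2_upper_part U HU).
  intros a b Ha Hb. unfold mmul, mtrace, scal2, id4, sum4.
  case_index a; case_index b; cbv [upper_part dual Nat.ltb Nat.leb Nat.eqb]; field.
Qed.

Lemma dual_mmul_dual U K : antisymmetric2 U -> antisymmetric2 K ->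
  teq2 (mmul (dual U) (dual K))
       (add2 (scal2 (-4) (mmul K U)) (scal2 (2 * mtrace (mmul K U)) id4)).
Proof.
  intros HU HK. rewrite (antisymmetric2_upper_part U HU), (antisymmetric2_upper_part K HK).
  intros a b Ha Hb. unfold mmul, mtrace, scal2, add2, id4, sum4.
  case_index a; case_index b; cbv [upper_part dual Nat.ltb Nat.leb Nat.eqb]; ring.
Qed.

(** * Cayley-Hamilton on a two-dimensional block *)

(* Coefficients from the power traces by Newton's identities. *)
Definition chpoly4 (M : T2) : T2 :=
  let M2 := mmul M M in let M3 := mmul M M2 in let M4 := mmul M M3 in
  let p1 := mtrace M in let p2 := mtrace M2 in let p3 := mtrace M3 in let p4 := mtrace M4 in
  fun a b => M4 a b - p1 * M3 a b + (p1^2 - p2)/2 * M2 a b - (p1^3 - 3*p1*p2 + 2*p3)/6 * M a b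
  + (p1^4 - 6*p1^2*p2 + 3*p2^2 + 8*p1*p3 - 6*p4)/24 * id4 a b.

Lemma cayley_hamilton4 M : teq2 (chpoly4 M) zero2.
Proof.
  intros a b Ha Hb. unfold chpoly4, zero2; cbv beta zeta.
  (* Clearing denominators first keeps [ring] fast. *)
  assert (E : forall x y z z' w w' u u' : R,
    x - y + z/2*z' - w/6*w' + u/24*u' = (24*x - 24*y + 12*z*z' - 4*w*w' + u*u')/24)
    by (intros; field).
  rewrite E. match goal with |- ?n / 24 = 0 => replace n with 0; [lra|] end.
  unfold mmul, mtrace, id4, sum4.
  case_index a; case_index b; cbv [Nat.eqb]; ring.
Qed.

Lemma mmul_combination (M0 M1 M2 M3 M4 P : T2) (c1 c2 c3 c4 : R) :
  teq2 (mmul (fun a b => M4 a b - c1 * M3 a b + c2 * M2 a b - c3 * M1 a b + c4 * M0 a b) P)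
       (fun a b => mmul M4 P a b - c1 * mmul M3 P a b + c2 * mmul M2 P a b
                   - c3 * mmul M1 P a b + c4 * mmul M0 P a b).
Proof. pointwise. Qed.

Lemma mmul_add_idem M N D x y :
  teq2 (mmul M D) zero2 -> teq2 (mmul D N) zero2 -> teq2 (mmul D D) D ->
  teq2 (mmul (add2 M (scal2 x D)) (add2 N (scal2 y D))) (add2 (mmul M N) (scal2 (x * y) D)).
Proof.
  intros H1 H2 H3.
  rewrite mmul_addl, !mmul_addr, !mmul_scall, !mmul_scalr, H1, H2, H3.
  intros a b _ _; unfold add2, scal2, zero2; ring.
Qed.

Section PlaneBlock.

Variable P : T2.
Hypothesis P_idem : teq2 (mmul P P) P.
Hypothesis P_tr : mtrace P = 2.

Lemma right_block_mmul Z Z' : teq2 (mmul Z' P) Z' -> teq2 (mmul (mmul Z Z') P) (mmul Z Z').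
Proof. intros H. rewrite mmul_assoc, H. reflexivity. Qed.
Lemma left_block_mmul Z Z' : teq2 (mmul P Z) Z -> teq2 (mmul P (mmul Z Z')) (mmul Z Z').
Proof. intros H. rewrite <- mmul_assoc, H. reflexivity. Qed.

Lemma compl_idem : teq2 (mmul (sub2 id4 P) (sub2 id4 P)) (sub2 id4 P).
Proof.
  rewrite mmul_subl, !mmul_subr, !mmul1l, !mmul1r, P_idem.
  intros a b _ _; unfold sub2; ring.
Qed.

Lemma mtrace_shift Z k : mtrace (add2 Z (scal2 k (sub2 id4 P))) = mtrace Z + 2 * k.
Proof. rewrite mtrace_add, mtrace_scal, mtrace_sub, mtrace_id4, P_tr. ring. Qed.

Lemma shift_mmul_P Z k : teq2 (mmul Z P) Z -> teq2 (mmul (add2 Z (scal2 k (sub2 id4 P))) P) Z.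
Proof.
  intros HZ. rewrite mmul_addl, mmul_scall, mmul_subl, mmul1l, P_idem, HZ.
  intros a b _ _; unfold add2, sub2, scal2; ring.
Qed.

Lemma shift_mmul Z Z' k k' : teq2 (mmul Z P) Z -> teq2 (mmul P Z') Z' ->
  teq2 (mmul (add2 Z (scal2 k (sub2 id4 P))) (add2 Z' (scal2 k' (sub2 id4 P))))
       (add2 (mmul Z Z') (scal2 (k * k') (sub2 id4 P))).
Proof.
  intros HZ HZ'. apply mmul_add_idem; [| |exact compl_idem].
  - rewrite mmul_subr, mmul1r, HZ. intros a b _ _; unfold sub2, zero2; ring.
  - rewrite mmul_subl, mmul1l, HZ'. intros a b _ _; unfold sub2, zero2; ring.
Qed.

Section Block.

Variable X : T2.
Hypothesis XP : teq2 (mmul X P) X.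
Hypothesis PX : teq2 (mmul P X) X.

(* Cayley-Hamilton for [X + t (1 - P)], whose spectrum is that of [X] on the
   range of [P] together with [t] twice, multiplied by [P]. *)
Lemma chpoly4_shift t :
  let X2 := mmul X X in let X3 := mmul X X2 in let X4 := mmul X X3 in
  let p1 := mtrace X + 2 * t in let p2 := mtrace X2 + 2 * t^2 in
  let p3 := mtrace X3 + 2 * t^3 in let p4 := mtrace X4 + 2 * t^4 in
  teq2 (fun a b => X4 a b - p1 * X3 a b + (p1^2 - p2)/2 * X2 a b
                   - (p1^3 - 3*p1*p2 + 2*p3)/6 * X a b
                   + (p1^4 - 6*p1^2*p2 + 3*p2^2 + 8*p1*p3 - 6*p4)/24 * P a b)
       zero2.
Proof.
  intros X2 X3 X4 p1 p2 p3 p4.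
  pose proof (left_block_mmul X X PX) as PX2. pose proof (left_block_mmul X X2 PX) as PX3.
  pose proof (right_block_mmul X X XP) as X2P. pose proof (right_block_mmul X X2 X2P) as X3P.
  pose proof (right_block_mmul X X3 X3P) as X4P.
  set (Y := add2 X (scal2 t (sub2 id4 P))).
  assert (Y2 : teq2 (mmul Y Y) (add2 X2 (scal2 (t * t) (sub2 id4 P))))
    by (apply shift_mmul; auto).
  assert (Y3 : teq2 (mmul Y (mmul Y Y)) (add2 X3 (scal2 (t * (t * t)) (sub2 id4 P))))
    by (rewrite Y2; apply shift_mmul; auto).
  assert (Y4 : teq2 (mmul Y (mmul Y (mmul Y Y))) (add2 X4 (scal2 (t * (t * (t * t))) (sub2 id4 P))))
    by (rewrite Y3; apply shift_mmul; auto).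
  assert (K1 : teq2 (mmul Y P) X) by (apply shift_mmul_P; auto).
  assert (K2 : teq2 (mmul (mmul Y Y) P) X2) by (rewrite Y2; apply shift_mmul_P; auto).
  assert (K3 : teq2 (mmul (mmul Y (mmul Y Y)) P) X3) by (rewrite Y3; apply shift_mmul_P; auto).
  assert (K4 : teq2 (mmul (mmul Y (mmul Y (mmul Y Y))) P) X4)
    by (rewrite Y4; apply shift_mmul_P; auto).
  pose proof (mmul_proper _ _ (cayley_hamilton4 Y) P P (reflexivity P)) as CH.
  unfold chpoly4 in CH; cbv beta zeta in CH.
  rewrite mmul_combination, mmul0l in CH.
  intros a b Ha Hb. specialize (CH a b Ha Hb); cbv beta in CH.
  rewrite (K1 a b Ha Hb), (K2 a b Ha Hb), (K3 a b Ha Hb), (K4 a b Ha Hb),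
    (mmul1l P a b Ha Hb), Y4, Y3, Y2, !mtrace_shift in CH.
  unfold Y in CH. rewrite mtrace_shift in CH.
  rewrite <- CH. unfold p1, p2, p3, p4. field.
Qed.

Lemma cayley_hamilton_plane :
  teq2 (add2 (sub2 (mmul X X) (scal2 (mtrace X) X))
              (scal2 ((mtrace X ^ 2 - mtrace (mmul X X)) / 2) P)) zero2.
Proof.
  intros a b Ha Hb.
  pose proof (chpoly4_shift 0 a b Ha Hb) as T0. pose proof (chpoly4_shift 1 a b Ha Hb) as T1.
  pose proof (chpoly4_shift (-1) a b Ha Hb) as Tm1. pose proof (chpoly4_shift 2 a b Ha Hb) as T2.
  pose proof (chpoly4_shift (-2) a b Ha Hb) as Tm2.
  cbv zeta in *. unfold add2, sub2, scal2, zero2 in *. lra.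
Qed.

End Block.

Lemma plane_anticommutator a u :
  teq2 (mmul a P) a -> teq2 (mmul P a) a -> teq2 (mmul u P) u -> teq2 (mmul P u) u ->
  teq2 (add2 (mmul a u) (mmul u a))
       (sub2 (add2 (scal2 (mtrace a) u) (scal2 (mtrace u) a))
             (scal2 (mtrace a * mtrace u - mtrace (mmul a u)) P)).
Proof.
  intros aP Pa uP Pu.
  pose proof (cayley_hamilton_plane a aP Pa) as Ca.
  pose proof (cayley_hamilton_plane u uP Pu) as Cu.
  assert (sP : teq2 (mmul (add2 a u) P) (add2 a u)) by (rewrite mmul_addl, aP, uP; reflexivity).
  assert (Ps : teq2 (mmul P (add2 a u)) (add2 a u)) by (rewrite mmul_addr, Pa, Pu; reflexivity).
  pose proof (cayley_hamilton_plane (add2 a u) sP Ps) as Cau.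
  rewrite mmul_addl, !mmul_addr, !mtrace_add, (mtrace_mmulC u a) in Cau.
  intros i j Hi Hj.
  specialize (Ca i j Hi Hj). specialize (Cu i j Hi Hj). specialize (Cau i j Hi Hj).
  unfold add2, sub2, scal2, zero2 in *. lra.
Qed.

Lemma plane_sandwich a u :
  teq2 (mmul a P) a -> teq2 (mmul P a) a -> teq2 (mmul u P) u -> teq2 (mmul P u) u ->
  teq2 (mmul u u) P -> mtrace u = 0 -> mtrace (mmul a u) = 0 ->
  teq2 (mmul (mmul u a) u) (sub2 (scal2 (mtrace a) P) a).
Proof.
  intros aP Pa uP Pu uu tru trau.
  pose proof (plane_anticommutator a u aP Pa uP Pu) as AC.
  rewrite tru, trau in AC.
  assert (ua : teq2 (mmul u a) (sub2 (scal2 (mtrace a) u) (mmul a u))).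
  { intros i j Hi Hj. specialize (AC i j Hi Hj). unfold add2, sub2, scal2 in *. lra. }
  rewrite ua, mmul_subl, mmul_scall, mmul_assoc, uu, aP. reflexivity.
Qed.

End PlaneBlock.

(** * The s-warped splitting *)

Definition unit_vec (a : nat) : nat -> R := fun i => if Nat.eqb i a then 1 else 0.

(* [quad h (y + t e_a) = 2 t (h y)_a + t^2 h_aa] stays nonnegative for all [t]. *)
Lemma psd_quad_zero_mul h y : symmetric2 h -> (forall x, 0 <= quad h x) -> quad h y = 0 ->
  forall a, (a < 4)%nat -> sum4 (fun b => h a b * y b) = 0.
Proof.
  intros Hs Hp Hy a Ha.
  set (be := sum4 (fun b => h a b * y b)).
  assert (Hc : 0 <= h a a).
  { pose proof (Hp (unit_vec a)) as H. unfold quad, unit_vec, sum4 in H.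
    case_index a; cbv [Nat.eqb] in H; lra. }
  assert (Hsym : sum4 (fun b => h b a * y b) = be).
  { apply sum4_ext. intros i Hi. rewrite (Hs i a) by auto. reflexivity. }
  assert (Hq : forall t, quad h (fun i => y i + t * unit_vec a i) =
    quad h y + t * (be + sum4 (fun b => h b a * y b)) + t^2 * h a a).
  { intros t. unfold quad, unit_vec, be, sum4. case_index a; cbv [Nat.eqb]; ring. }
  set (c := h a a) in *.
  set (t := - be / (c + 1)).
  pose proof (Hp (fun i => y i + t * unit_vec a i)) as H. rewrite Hq, Hsym, Hy in H.
  assert (H2 : 0 <= (c + 1)^2 * (0 + t * (be + be) + t^2 * c)) by (apply Rmult_le_pos; nra).
  replace ((c + 1)^2 * (0 + t * (be + be) + t^2 * c)) with (- be^2 * (c + 2)) in H2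
    by (unfold t; field; lra).
  nra.
Qed.

Lemma timelike_sign_sqrt beta p : p < 0 -> beta <> 0 ->
  beta = - (beta * p) / Rabs (beta * p) / 2 * sqrt (4 * beta ^ 2).
Proof.
  intros Hp Hb.
  replace (4 * beta ^ 2) with (Rsqr (2 * beta)) by (unfold Rsqr; ring).
  rewrite sqrt_Rsqr_abs.
  destruct (Rlt_or_le 0 beta).
  - rewrite (Rabs_left (beta * p)), (Rabs_right (2 * beta)) by nra. field. nra.
  - rewrite (Rabs_right (beta * p)), (Rabs_left (2 * beta)) by nra. field. nra.
Qed.

Section SWarpedPoint.

Variables g G v h : T2.
Hypothesis g_sym : symmetric2 g.
Hypothesis G_sym : symmetric2 G.
Hypothesis G_inv : is_inverse G g.
Hypothesis splitting : swarped_split g G v h.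
Hypothesis g_lorentzian : lorentzian_signature g.

Lemma transp_G : teq2 (transp G) G.
Proof. now apply symmetric2_transp. Qed.
Lemma transp_g : teq2 (transp g) g.
Proof. now apply symmetric2_transp. Qed.
Lemma G_g : teq2 (mmul G g) id4.
Proof. intros a b Ha Hb. apply G_inv; auto. Qed.
Lemma g_G : teq2 (mmul g G) id4.
Proof. rewrite <- transp_g, <- transp_G, <- transp_mmul, G_g. apply transp_id4. Qed.

Lemma mmul_G_g X : teq2 (mmul (mmul X G) g) X.
Proof. rewrite mmul_assoc, G_g, mmul1r. reflexivity. Qed.
Lemma mmul_g_G X : teq2 (mmul g (mmul G X)) X.
Proof. rewrite <- mmul_assoc, g_G, mmul1l. reflexivity. Qed.
Lemma mmul_G_inj X Y : teq2 (mmul G X) (mmul G Y) -> teq2 X Y.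
Proof. intros H. rewrite <- (mmul_g_G X), <- (mmul_g_G Y), H. reflexivity. Qed.

Lemma g_split : teq2 g (add2 v h).
Proof. now destruct splitting as (_ & _ & H & _). Qed.
Lemma v_eq : teq2 v (sub2 g h).
Proof. rewrite g_split. intros a b _ _. unfold add2, sub2. ring. Qed.
Lemma h_eq : teq2 h (sub2 g v).
Proof. rewrite g_split. intros a b _ _. unfold add2, sub2. ring. Qed.
Lemma transp_v : teq2 (transp v) v.
Proof. destruct splitting as (H & _). now apply symmetric2_transp. Qed.
Lemma transp_h : teq2 (transp h) h.
Proof. destruct splitting as (_ & H & _). now apply symmetric2_transp. Qed.
Lemma v_G_v : teq2 (mmul (mmul v G) v) v.
Proof. rewrite <- dot_mmul. now destruct splitting as (_ & _ & _ & H & _). Qed.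
Lemma h_G_h : teq2 (mmul (mmul h G) h) h.
Proof. rewrite <- dot_mmul. now destruct splitting as (_ & _ & _ & _ & H & _). Qed.
Lemma v_G_h : teq2 (mmul (mmul v G) h) zero2.
Proof. rewrite <- dot_mmul. now destruct splitting as (_ & _ & _ & _ & _ & H & _). Qed.
Lemma h_G_v : teq2 (mmul (mmul h G) v) zero2.
Proof.
  rewrite <- transp_v, <- transp_h at 1.
  rewrite (mmul_transp_swap _ _ _ _ transp_G v_G_h). apply transp0.
Qed.
Lemma tr_G_v : mtrace (mmul G v) = 2.
Proof. rewrite <- tr_mtrace. now destruct splitting as (_ & _ & _ & _ & _ & _ & H & _). Qed.
Lemma tr_G_h : mtrace (mmul G h) = 2.
Proof. rewrite <- tr_mtrace. now destruct splitting as (_ & _ & _ & _ & _ & _ & _ & H & _). Qed.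
Lemma h_psd x : 0 <= quad h x.
Proof. now destruct splitting as (_ & _ & _ & _ & _ & _ & _ & _ & _ & H). Qed.

Lemma right_v_of_h X : teq2 (mmul (mmul X G) h) zero2 -> teq2 (mmul (mmul X G) v) X.
Proof.
  intros H. rewrite v_eq, mmul_subr, H, mmul_G_g. intros a b _ _. unfold sub2, zero2. ring.
Qed.
Lemma right_h_of_v X : teq2 (mmul (mmul X G) v) zero2 -> teq2 (mmul (mmul X G) h) X.
Proof.
  intros H. rewrite h_eq, mmul_subr, H, mmul_G_g. intros a b _ _. unfold sub2, zero2. ring.
Qed.

(* The columns of [G N] are [h]-null, and [h] is positive semidefinite. *)
Lemma antisym_h_null N : teq2 (transp N) (scal2 (-1) N) ->
  teq2 (mmul (mmul h G) N) N -> teq2 (mmul (mmul N G) N) zero2 -> teq2 N zero2.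
Proof.
  intros NT hN NN.
  assert (Q0 : teq2 (mmul (mmul (transp (mmul G N)) h) (mmul G N)) zero2).
  { rewrite transp_mmul, NT, transp_G, !mmul_scall, !mmul_assoc.
    rewrite <- (mmul_assoc h G N), hN, <- mmul_assoc, NN.
    intros a b _ _. unfold scal2, zero2. ring. }
  intros a j Ha Hj.
  assert (Hy : quad h (fun b => mmul G N b j) = 0).
  { transitivity (mmul (mmul (transp (mmul G N)) h) (mmul G N) j j).
    - unfold quad, mmul, transp, sum4. ring.
    - apply (Q0 j j Hj Hj). }
  pose proof (psd_quad_zero_mul h _ (proj1 (proj2 splitting)) h_psd Hy a Ha) as Hz.
  rewrite <- (hN a j Ha Hj), mmul_assoc by auto. exact Hz.
Qed.

Lemma mdet_G_g : mdet G * mdet g = 1.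
Proof. rewrite <- mdet_mmul, G_g. apply mdet_id4. Qed.
Lemma mdet_g_neg : mdet g < 0.
Proof.
  pose proof (lorentzian_mdet_nonpos g g_lorentzian). pose proof mdet_G_g.
  destruct (Req_dec (mdet g) 0) as [E|]; [rewrite E in *; lra | lra].
Qed.

Lemma raise_right X : teq2 (mmul (mmul X G) v) X -> teq2 (mmul (mmul G X) (mmul G v)) (mmul G X).
Proof. intros H. rewrite !mmul_assoc, <- (mmul_assoc X G v), H. reflexivity. Qed.
Lemma raise_left X : teq2 (mmul (mmul v G) X) X -> teq2 (mmul (mmul G v) (mmul G X)) (mmul G X).
Proof. intros H. rewrite !mmul_assoc, <- (mmul_assoc v G X), H. reflexivity. Qed.

Lemma v_G_supported A : symmetric2 A -> teq2 (dot G A h) zero2 -> teq2 (mmul (mmul v G) A) A.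
Proof.
  intros HA HAh. rewrite dot_mmul in HAh.
  pose proof (mmul_transp_swap _ _ _ _ transp_G (right_v_of_h A HAh)) as H.
  now rewrite transp_v, (symmetric2_transp A HA) in H.
Qed.

Lemma tr_dot_Pi beta B : teq2 B (scal2 beta (sub2 v h)) -> tr G (dot G B B) = 4 * beta ^ 2.
Proof.
  intros HB.
  assert (PP : teq2 (mmul (mmul (sub2 v h) G) (sub2 v h)) (add2 v h)).
  { rewrite !mmul_subl, !mmul_subr, v_G_v, v_G_h, h_G_v, h_G_h.
    intros a b _ _. unfold add2, sub2, zero2. ring. }
  rewrite tr_mtrace, dot_mmul, HB.
  repeat (rewrite mmul_scall || rewrite mmul_scalr).
  rewrite PP, mmul_addr, !mtrace_scal, mtrace_add, tr_G_v, tr_G_h.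
  ring.
Qed.

Lemma quad_Pi_neg x : quad g x = -1 -> quad (sub2 v h) x < 0.
Proof.
  intros Hx. rewrite g_split, quad_add in Hx. rewrite quad_sub.
  pose proof (h_psd x). lra.
Qed.

Section TimelikeBivector.

Variable U : T2.
Hypothesis U_anti : antisymmetric2 U.
Hypothesis U_sq : teq2 (dot G U U) v.

Lemma transp_U : teq2 (transp U) (scal2 (-1) U).
Proof. now apply antisymmetric2_transp. Qed.
Lemma U_G_U : teq2 (mmul (mmul U G) U) v.
Proof. now rewrite <- dot_mmul. Qed.

Lemma U_G_h : teq2 (mmul (mmul U G) h) zero2.
Proof.
  assert (Uv : teq2 (mmul (mmul U G) v) (mmul (mmul v G) U))
    by (rewrite <- U_G_U, !mmul_assoc; reflexivity).
  assert (Uh : teq2 (mmul (mmul U G) h) (mmul (mmul h G) U)).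
  { rewrite h_eq, mmul_subr, !mmul_subl, mmul_G_g, g_G, mmul1l, Uv. reflexivity. }
  apply antisym_h_null.
  - rewrite !transp_mmul, transp_U, transp_G, transp_h, !mmul_scalr, <- mmul_assoc, <- Uh.
    reflexivity.
  - rewrite Uh, <- !mmul_assoc, h_G_h. reflexivity.
  - transitivity (mmul (mmul (mmul (mmul U G) h) G) (mmul (mmul h G) U)).
    { rewrite <- Uh. reflexivity. }
    transitivity (mmul (mmul (mmul U G) (mmul (mmul h G) h)) (mmul G U)).
    { rewrite !mmul_assoc. reflexivity. }
    rewrite h_G_h, Uh.
    transitivity (mmul (mmul h G) (mmul (mmul U G) U)).
    { rewrite !mmul_assoc. reflexivity. }
    rewrite U_G_U. exact h_G_v.
Qed.

Lemma U_G_v : teq2 (mmul (mmul U G) v) U.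
Proof. exact (right_v_of_h U U_G_h). Qed.
Lemma v_G_U : teq2 (mmul (mmul v G) U) U.
Proof.
  pose proof (mmul_transp_swap _ _ _ _ transp_G U_G_v) as H.
  rewrite transp_v, transp_U, mmul_scalr in H.
  intros a b Ha Hb. specialize (H a b Ha Hb). unfold scal2 in H. lra.
Qed.

Lemma U_sandwich A : symmetric2 A -> teq2 (dot G A h) zero2 ->
  teq2 (mmul (mmul (mmul (mmul U G) A) (transp G)) (transp U)) (sub2 A (scal2 (tr G A) v)).
Proof.
  intros HA HAh. pose proof (v_G_supported A HA HAh) as v_G_A.
  rewrite dot_mmul in HAh. pose proof (right_v_of_h A HAh) as A_G_v.
  assert (uu : teq2 (mmul (mmul G U) (mmul G U)) (mmul G v))
    by (rewrite mmul_assoc, <- (mmul_assoc U G U), U_G_U; reflexivity).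
  assert (tru : mtrace (mmul G U) = 0)
    by (apply mtrace_sym_anti; [apply transp_G | apply transp_U]).
  assert (trau : mtrace (mmul (mmul G A) (mmul G U)) = 0).
  { rewrite <- mmul_assoc. apply mtrace_sym_anti; [|apply transp_U].
    rewrite !transp_mmul, transp_G, (symmetric2_transp A HA), mmul_assoc. reflexivity. }
  pose proof (plane_sandwich (mmul G v) (raise_left v v_G_v) tr_G_v (mmul G A) (mmul G U)
    (raise_right A A_G_v) (raise_left A v_G_A) (raise_right U U_G_v) (raise_left U v_G_U)
    uu tru trau) as S.
  assert (UAU : teq2 (mmul (mmul (mmul (mmul U G) A) G) U) (sub2 (scal2 (tr G A) v) A)).
  { apply mmul_G_inj. rewrite mmul_subr, mmul_scalr, tr_mtrace, <- S, !mmul_assoc. reflexivity. }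
  rewrite transp_G, transp_U, mmul_scalr, UAU.
  intros a b _ _. unfold scal2, sub2. ring.
Qed.

Notation W := (hodge g G U).

Lemma hodge_formula :
  teq2 W (scal2 (sqrt (Rabs (mdet g)) / 2 * mdet G) (mmul (mmul g (dual U)) g)).
Proof.
  rewrite hodge_dual, transp_G, (dual_congr_inv G g U transp_G g_G G_g).
  intros a b _ _. unfold scal2. ring.
Qed.

(* The Lorentzian signature enters here, through [|det g| = - det g]. *)
Lemma hodge_scale : 4 * (sqrt (Rabs (mdet g)) / 2 * mdet G) ^ 2 * mdet g = -1.
Proof.
  pose proof mdet_G_g. pose proof mdet_g_neg.
  replace (4 * (sqrt (Rabs (mdet g)) / 2 * mdet G) ^ 2 * mdet g)
    with (sqrt (Rabs (mdet g)) * sqrt (Rabs (mdet g)) * mdet G ^ 2 * mdet g) by field.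
  rewrite sqrt_sqrt, Rabs_left by (auto; apply Rabs_pos).
  replace (- mdet g * mdet G ^ 2 * mdet g) with (- (mdet G * mdet g) ^ 2) by ring.
  rewrite H. ring.
Qed.

Lemma transp_hodge : teq2 (transp W) (scal2 (-1) W).
Proof.
  rewrite hodge_formula, transp_scal, !transp_mmul, transp_g, dual_transp,
    mmul_scall, mmul_scalr, mmul_assoc.
  intros a b _ _. unfold scal2. ring.
Qed.

(* [dual U] times [U] is scalar, so [W G U] is a multiple of [g]; it vanishes
   because [U G h = 0]. *)
Lemma hodge_G_U : teq2 (mmul (mmul W G) U) zero2.
Proof.
  set (c := sqrt (Rabs (mdet g)) / 2 * mdet G).
  set (k := mtrace (mmul (dual U) U) / 4).
  assert (WU : teq2 (mmul (mmul W G) U) (scal2 (c * k) g)).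
  { rewrite hodge_formula, !mmul_scall, !mmul_assoc, mmul_g_G, dual_mmul_self, mmul_scalr, mmul1r
      by exact U_anti.
    intros a b _ _. unfold scal2, c, k. ring. }
  assert (ck : c * k = 0).
  { assert (E : teq2 (scal2 (c * k) h) zero2).
    { transitivity (mmul (mmul (scal2 (c * k) g) G) h).
      { rewrite !mmul_scall, g_G, mmul1l. reflexivity. }
      rewrite <- WU, !mmul_assoc, <- (mmul_assoc U G h), U_G_h, !mmul0r. reflexivity. }
    apply (mmul_proper _ _ (reflexivity G)) in E.
    apply mtrace_proper in E.
    rewrite mmul_scalr, mtrace_scal, tr_G_h, mmul0r, mtrace0 in E. lra. }
  rewrite WU, ck. intros a b _ _. unfold scal2, zero2. ring.
Qed.

Lemma hodge_G_v : teq2 (mmul (mmul W G) v) zero2.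
Proof. rewrite <- U_G_U, <- !mmul_assoc, hodge_G_U, mmul0l, mmul0l. reflexivity. Qed.

Lemma hodge_G_h : teq2 (mmul (mmul W G) h) W.
Proof. exact (right_h_of_v W hodge_G_v). Qed.

Lemma dual_U_g_dual_U :
  teq2 (mmul (mmul (dual U) g) (dual U))
       (scal2 (mdet g) (sub2 (scal2 4 G) (scal2 4 (mmul (mmul G v) G)))).
Proof.
  set (K := mmul (mmul G U) G).
  assert (K_anti : antisymmetric2 K).
  { intros a b Ha Hb.
    assert (T : teq2 (transp K) (scal2 (-1) K)).
    { unfold K. rewrite !transp_mmul, transp_G, transp_U, mmul_scall, mmul_scalr, mmul_assoc.
      reflexivity. }
    specialize (T b a Hb Ha). unfold transp, scal2 in T. lra. }
  assert (dU : teq2 (dual U) (scal2 (mdet g) (mmul (mmul G (dual K)) G))).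
  { rewrite <- (dual_congr_inv g G K transp_g G_g g_G).
    unfold K. rewrite !mmul_assoc, mmul_g_G, <- mmul_assoc, mmul_G_g. reflexivity. }
  assert (KU : teq2 (mmul K U) (mmul G v)).
  { unfold K. rewrite !mmul_assoc, <- (mmul_assoc U G U), U_G_U. reflexivity. }
  rewrite dU at 2.
  rewrite mmul_scalr, !mmul_assoc, mmul_g_G, <- mmul_assoc,
    (dual_mmul_dual U K U_anti K_anti), KU, tr_G_v, mmul_addl, !mmul_scall, mmul1l.
  rewrite (mmul_assoc G v G). intros a b _ _. unfold add2, sub2, scal2. ring.
Qed.

Lemma hodge_sq : teq2 (mmul (mmul W G) W) (scal2 (-1) h).
Proof.
  pose proof hodge_scale as Hc.
  set (c := sqrt (Rabs (mdet g)) / 2 * mdet G) in *.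
  rewrite hodge_formula, mmul_scall, mmul_scall, mmul_scalr.
  transitivity (scal2 (c * c) (mmul g (mmul (mmul (mmul (dual U) g) (dual U)) g))).
  { rewrite !mmul_assoc, mmul_g_G. intros a b _ _. unfold scal2, c. ring. }
  assert (E : teq2 (mmul g (mmul (sub2 (scal2 4 G) (scal2 4 (mmul (mmul G v) G))) g))
                   (scal2 4 h)).
  { rewrite mmul_subl, mmul_subr, !mmul_scall, !mmul_scalr, G_g, mmul_G_g, mmul1r, mmul_g_G, h_eq.
    intros a b _ _. unfold scal2, sub2. ring. }
  rewrite dual_U_g_dual_U, mmul_scall, mmul_scalr, E.
  intros a b _ _. unfold scal2.
  transitivity (4 * c ^ 2 * mdet g * h a b); [ring | rewrite Hc; ring].
Qed.

Lemma Sdf_act_ricci A mu : symmetric2 A -> teq2 (dot G A h) zero2 ->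
  teq2 (act G (Sdf g G U) (add2 A (scal2 mu h)))
       (sub2 (sub2 A (scal2 (tr G A) v)) (scal2 mu h)).
Proof.
  intros HA HAh.
  assert (WA : teq2 (mmul (mmul W G) A) zero2).
  { rewrite <- (v_G_supported A HA HAh), <- !mmul_assoc, hodge_G_v, mmul0l, mmul0l.
    reflexivity. }
  rewrite act_Sdf, !mmul_addr, !mmul_addl, !mmul_scalr, !mmul_scall, U_sandwich, U_G_h, WA,
    hodge_G_h, transp_G, transp_hodge, !mmul_scalr, hodge_sq by auto.
  rewrite !mmul0l. intros a b _ _. unfold add2, sub2, scal2, zero2. ring.
Qed.

Lemma ricci_B_formula Ric A mu : symmetric2 A -> teq2 (dot G A h) zero2 ->
  teq2 Ric (add2 A (scal2 mu h)) ->
  teq2 (sub2 (sub2 Ric (act G (Sdf g G U) Ric)) (scal2 (tr G Ric / 2) g))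
       (scal2 (tr G Ric / 2 - 2 * mu) (sub2 v h)).
Proof.
  intros HA HAh HR.
  assert (trR : tr G Ric = tr G A + 2 * mu).
  { rewrite !tr_mtrace, HR, mmul_addr, mtrace_add, mmul_scalr, mtrace_scal, tr_G_h. ring. }
  rewrite trR, HR, Sdf_act_ricci, g_split by auto.
  intros a b _ _. unfold add2, sub2, scal2. field.
Qed.

End TimelikeBivector.

End SWarpedPoint.

Theorem mainTheorem10 :
  forall (g gi : T2) (Rm : T4) (v h U A : T2) (mu rho : R),
    symmetric2 g -> symmetric2 gi -> is_inverse gi g -> lorentzian_signature g ->
    curvature_symmetries Rm ->
    swarped_split g gi v h ->
    antisymmetric2 U -> teq2 (dot gi U U) v ->
    teq4 (weyl g gi Rm) (scal4 rho (add4 (scal4 3 (Sdf g gi U)) (Gt g))) ->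
    symmetric2 A -> teq2 (dot gi A h) zero2 ->
    teq2 (ricci gi Rm) (add2 A (scal2 mu h)) ->
    let Ric := ricci gi Rm in
    let r := scal gi Rm in
    let B := sub2 (sub2 Ric (act gi (Sdf g gi U) Ric)) (scal2 (r / 2) g) in
    let Pi := sub2 v h in
    let beta := r / 2 - 2 * mu in
    teq2 B (scal2 beta Pi) /\
    mu = r / 4 - beta / 2 /\
    (teq2 B zero2 -> beta = 0) /\
    (~ teq2 B zero2 ->
       forall x : nat -> R, quad g x = -1 ->
         let eps := - quad B x / Rabs (quad B x) in
         beta = eps / 2 * sqrt (tr gi (dot gi B B))).
Proof.
  intros g gi Rm v h U A mu rho g_sym gi_sym gi_inv g_lor _ splitting U_anti U_sq _ A_sym A_h
    Ric_eq Ric r B Pi beta.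
  assert (HB : teq2 B (scal2 beta Pi))
    by exact (ricci_B_formula g gi v h g_sym gi_sym gi_inv splitting g_lor U U_anti U_sq
                Ric A mu A_sym A_h Ric_eq).
  assert (Htr : tr gi (dot gi B B) = 4 * beta ^ 2)
    by exact (tr_dot_Pi g gi v h gi_sym splitting beta B HB).
  split; [exact HB|]. split; [unfold beta; field|]. split.
  - intros HB0. rewrite HB0, tr_mtrace, dot_mmul, !mmul0r, mtrace0 in Htr. nra.
  - intros HBn x Hx eps.
    assert (beta <> 0).
    { intros Z. apply HBn. rewrite HB, Z. intros a b _ _. unfold scal2, zero2. ring. }
    unfold eps. rewrite Htr, HB, quad_scal.
    apply timelike_sign_sqrt; [exact (quad_Pi_neg g gi v h splitting x Hx) | assumption].
Qed.
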